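(* Let $F=\mathbb{F}_q$ be a finite field of characteristic not $2$, let $K=\mathbb{F}_{q^2}$ be its quadratic extension, $\sigma$ the non-trivial automorphism of $K/F$, and $d\in K$ with $K=F(d)$ and $d^2\in F$. Let $a\in K\setminus F$, $f(t)=t^2-a\in K[t;\sigma]$, $S_f=(K/F,\sigma,a)$ the nonassociative quaternion algebra, and $L_f=S_f\setminus\{0\}$ its multiplicative loop. (i) If $a\ne\lambda d$ for all $\lambda\in F^\times$, then $\mathrm{Aut}(L_f)$ contains a subgroup isomorphic to the cyclic group $\mathbb{Z}/(q+1)\mathbb{Z}$; all automorphisms in this subgroup are inner and extend to automorphisms of $S_f$. (ii) If $a=\lambda d$ for some $\lambda\in F^\times$, then $\mathrm{Aut}(L_f)$ contains a subgroup isomorphic to the dicyclic group of order $2q+2$, all of whose elements extend to automorphisms of $S_f$.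
   Context: $K[t;\sigma]$ is the twisted polynomial ring with $tb=\sigma(b)t$ for $b\in K$. $(K/F,\sigma,a)=K[t;\sigma]/K[t;\sigma](t^2-a)$ is the set of polynomials $x_0+x_1t$ ($x_i\in K$) with multiplication $g\circ h=gh\bmod_r(t^2-a)$, the remainder of right division by $t^2-a$; for $a\in K\setminus F$ it is a proper semifield, and $L_f$ is the loop of its nonzero elements. An inner automorphism of $L_f$ is a loop automorphism of the form $x\mapsto (c_lx)c$ with $c_l$ the left inverse of $c$. The dicyclic group of order $4l$ is $\langle x,y\mid x^{2l}=1,\ y^2=x^l,\ y^{-1}xy=x^{-1}\rangle$. *)

From HB Require Import structures.
From mathcomp Require Import all_boot all_order all_algebra all_fingroup all_solvable.
Set Implicit Arguments. Unset Strict Implicit. Unset Printing Implicit Defensive.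
Import GRing.Theory.
Local Open Scope ring_scope.

(* Elements x0 + x1 t of S_f = K[t;sigma]/K[t;sigma](t^2 - a) are encoded as
   pairs (x0, x1) : K * K. *)
Section Sf.
Variables (K : fieldType) (sigma : K -> K) (a : K).

Definition sf_zero : K * K := (0, 0).
Definition sf_one : K * K := (1, 0).
Definition sf_add (x y : K * K) : K * K := (x.1 + y.1, x.2 + y.2).
Definition sf_scale (c : K) (x : K * K) : K * K := (c * x.1, c * x.2).
(* (x0 + x1 t) o (y0 + y1 t) = (x0 y0 + x1 sigma(y1) a) + (x0 y1 + x1 sigma(y0)) t,
   i.e. the remainder of right division of the product in K[t;sigma] by t^2 - a *)
Definition sf_mul (x y : K * K) : K * K :=
  (x.1 * y.1 + x.2 * sigma y.2 * a, x.1 * y.2 + x.2 * sigma y.1).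

Definition sf_alg_aut (H : K * K -> K * K) : Prop :=
  [/\ bijective H,
      forall x y, H (sf_add x y) = sf_add (H x) (H y),
      forall c x, sigma c = c -> H (sf_scale c x) = sf_scale c (H x)
    & forall x y, H (sf_mul x y) = sf_mul (H x) (H y)].
End Sf.
Arguments sf_zero {K}.
Arguments sf_one {K}.

Section Loop.
Variables (K : finFieldType) (sigma : K -> K) (a : K).

(* A loop automorphism of L_f = S_f \ {0} is encoded as a permutation of S_f
   fixing 0 (equivalently: a permutation of L_f) that preserves the product. *)
Definition loop_aut (phi : {perm (K * K)}) : bool :=
  (phi sf_zero == sf_zero) &&
  [forall x, forall y, phi (sf_mul sigma a x y) == sf_mul sigma a (phi x) (phi y)].

Definition AutLf : {set {perm (K * K)}} := [set phi | loop_aut phi].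

Definition inner_aut (phi : {perm (K * K)}) : Prop :=
  exists c cl : K * K, [/\ c != sf_zero,
     sf_mul sigma a cl c = sf_one &
     forall x, x != sf_zero -> phi x = sf_mul sigma a (sf_mul sigma a cl x) c].

Definition extends_to_aut (phi : {perm (K * K)}) : Prop :=
  exists H : K * K -> K * K, sf_alg_aut sigma a H /\
     forall x, x != sf_zero -> H x = phi x.

Definition fixF : {set K} := [set x | sigma x == x].
End Loop.

From HB Require Import structures.
From mathcomp Require Import all_boot all_order all_algebra all_fingroup all_solvable.
From mathcomp Require Import all_field.
From mathcomp Require Import zify ring.

Set Implicit Arguments. Unset Strict Implicit. Unset Printing Implicit Defensive.
Import GRing.Theory FinRing.Theory.

(* Let F be the fixed field of sigma and q = |F|. As K = F + F d, |K| = q^2 and sigma is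
   the Frobenius x |-> x^q. If k sigma(k) = 1, the twist x0 + x1 t |-> x0 + x1 k t is an
   automorphism of S_f, and for k = sigma(c)/c it is conjugation by c. Taking c a generator of
   K^x, w = sigma(c)/c = c^(q-1) has order q+1, so the twists by powers of w form the cyclic
   group of (i).
   If sigma(a) = -a, the semilinear map x0 + x1 t |-> sigma(x0) + sigma(x1) k t with
   k sigma(k) = -1 (take k = c^((q-1)/2)) is an automorphism as well; it inverts the twist by w
   and squares to the twist by -1 = w^((q+1)/2), so the two generate a group satisfying the
   dicyclic relations, of order 2(q+1) since the semilinear map is not a twist. That these
   relations present a group of order 2n is seen on the extended dihedral group
   <u> x| <v> (u^n = v^4 = 1, u^v = u^-1), whose quotient by the central involution
   u^(n/2) v^2 is the dicyclic group. *)

Section Dicyclic.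
Local Open Scope group_scope.

Section DicyclicQuotient.

Variables (n : nat) (gT : finGroupType) (u v : gT).
Hypotheses (n_gt1 : (1 < n)%N) (n_even : ~~ odd n).
Hypotheses (sd_uv : <[u]> ><| <[v]> = [set: gT]) (o_u : #[u] = n) (o_v : #[v] = 4)
  (conj_uv : u ^ v = u^-1).

Local Notation r := n./2.
Let z := u ^+ r * v ^+ 2.

Let double_r : (2 * r)%N = n.
Proof. by rewrite mul2n -[RHS]odd_double_half (negPf n_even). Qed.

Let expu_n : u ^+ n = 1.
Proof. by rewrite -o_u expg_order. Qed.

Let expv_4 : v ^+ 4 = 1.
Proof. by rewrite -o_v expg_order. Qed.

Let r_gt0 : (0 < r)%N.
Proof. by move: n_gt1; rewrite -double_r; lia. Qed.

Lemma conjg_expv j : u ^ (v ^+ j) = if odd j then u^-1 else u.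
Proof.
elim: j => [|j IHj]; first by rewrite conjg1.
by rewrite expgS conjgM conj_uv conjVg IHj (fun_if inv) invgK if_neg.
Qed.

Lemma commute_expu_half : commute (u ^+ r) v.
Proof.
have inv_ur : (u ^+ r)^-1 = u ^+ r.
  by apply/eqP; rewrite eq_invg_mul -expgD addnn -mul2n double_r expu_n.
by rewrite /commute conjgC conjXg conj_uv expgVn inv_ur.
Qed.

Lemma cent_dicyclic_kernel : [set: gT] \subset 'C[z].
Proof.
have cz_u : commute u z.
  apply: commuteM; first exact: commuteX.
  by rewrite /commute conjgC conjg_expv.
have cz_v : commute v z.
  by apply: commuteM; [apply: commute_sym; apply: commute_expu_half | apply: commuteX].
rewrite -(sdprodW sd_uv) mulG_subG !cycle_subG.
by apply/andP; split; apply/cent1P; apply: commute_sym.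
Qed.

Lemma order_dicyclic_kernel : #[z] = 2.
Proof.
have [_ _ _ ti_uv] := sdprodP sd_uv.
apply: (prime_nt_dvdP (isT : prime 2)).
  rewrite order_eq1; apply/eqP => z1.
  have : u ^+ r \in <[u]> :&: <[v]>.
    rewrite inE mem_cycle /=.
    have -> : u ^+ r = (v ^+ 2)^-1 by apply/eqP; rewrite eq_mulgV1 invgK -/z z1.
    by rewrite groupV mem_cycle.
  rewrite ti_uv inE -order_dvdn o_u => /dvdn_leq.
  by move=> /(_ r_gt0); lia.
rewrite order_dvdn expgMn; last exact/commuteX/commute_expu_half.
by rewrite -!expgM mulnC double_r expu_n mul1g -[(2 * 2)%N]/4 expv_4.
Qed.

Let norm_kernel : 'N(<[z]>) = [set: gT].
Proof.
by apply/eqP; rewrite eqEsubset subsetT cents_norm // cent_cycle cent_dicyclic_kernel.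
Qed.

Lemma card_dicyclic_quotient : #|[set: gT] / <[z]>| = (2 * n)%N.
Proof.
rewrite card_quotient ?norm_kernel // -divgS ?subsetT // -orderE order_dicyclic_kernel.
by rewrite -(sdprod_card sd_uv) -!orderE o_u o_v -[4]/(2 * 2)%N mulnA mulnK // mulnC.
Qed.

Lemma dicyclic_quotient_homg :
  [set: gT] / <[z]> \homg Grp (x : y : (x ^+ n, y ^+ 2 = x ^+ r, x ^ y = x^-1)).
Proof.
apply/existsP; exists (coset <[z]> u, coset <[z]> v); rewrite /= !xpair_eqE.
rewrite -!morphX -?morphJ -?morphV /= ?norm_kernel ?in_setT // expu_n.
rewrite conj_uv morph1 !eqxx -(sdprodWY sd_uv) quotientY ?norm_kernel ?subsetT //=.
rewrite !quotient_cycle ?norm_kernel ?in_setT // eqxx /=.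
by rewrite -(coset_kerl _ (cycle_id z)) /z -mulgA -expgD -[(2 + 2)%N]/4 expv_4 mulg1 eqxx.
Qed.

Lemma dicyclic_homg_quotient (rT : finGroupType) (H : {group rT}) :
    H \homg Grp (x : y : (x ^+ n, y ^+ 2 = x ^+ r, x ^ y = x^-1)) ->
  H \homg [set: gT] / <[z]>.
Proof.
case/existsP=> -[x y] /= /eqP[def_H xn y2 conj_xy].
have o_x : (#[x] %| #[u])%N by rewrite o_u order_dvdn xn.
have o_y : (#[y] %| #[v])%N.
  by rewrite o_v order_dvdn (expgM y 2 2) y2 -expgM mulnC double_r xn.
have act_xy : {in <[u]> & <[v]>, morph_act 'J 'J (eltm o_x) (eltm o_y)}.
  move=> _ _ /cycleP[i ->] /cycleP[j ->] /=.
  rewrite conjXg conjg_expv fun_if if_arg fun_if expgVn morphV ?mem_cycle //= !eltmE.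
  rewrite -expgVn -if_arg -fun_if conjXg; congr (_ ^+ i).
  rewrite -{2}[j]odd_double_half addnC expgD -mul2n expgM y2.
  rewrite -expgM conjgM (conjgE x) commuteX // mulKg.
  by case: (odd j); rewrite ?conjg1.
pose f := sdprodm sd_uv act_xy.
have ker_f : 'ker (coset <[z]>) \subset 'ker f.
  rewrite ker_coset cycle_subG /= ker_sdprodm.
  apply/imset2P; exists (u ^+ r) (v ^+ 2); first exact: mem_cycle.
    by rewrite inE mem_cycle /= !eltmE y2.
  by apply: canRL (mulgK _) _; rewrite -mulgA -expgD expv_4 mulg1.
have dom_f : 'dom f \subset 'dom (coset <[z]>) by rewrite /dom norm_kernel subsetT.
apply/homgP; exists (factm_morphism ker_f dom_f); rewrite morphim_factm /=.
rewrite -{2}(sdprodW sd_uv) morphim_sdprodm // !morphim_cycle ?cycle_id //= !eltm_id.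
by rewrite -def_H norm_joinEr // norms_cycle conj_xy groupV cycle_id.
Qed.

Lemma dicyclic_quotient_isog :
  ([set: gT] / <[z]>)%G \isog Grp (x : y : (x ^+ n, y ^+ 2 = x ^+ r, x ^ y = x^-1)).
Proof. exact: intro_isoGrp dicyclic_quotient_homg dicyclic_homg_quotient. Qed.

End DicyclicQuotient.

Lemma ext_dihedral_sdprod n p : (1 < n)%N -> (1 < p)%N -> (2 %| p)%N ->
  exists u v : Extremal.gtype n p n.-1,
    [/\ <[u]> ><| <[v]> = [set: _], #[u] = n, #[v] = p & u ^ v = u^-1].
Proof.
move=> n_gt1 p_gt1 even_p.
have := card_ext_dihedral n_gt1 p_gt1 even_p.
have := Grp_ext_dihedral n_gt1 p_gt1 even_p [set: Extremal.gtype n p n.-1]%G.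
rewrite homg_refl => /esym /existsP[[u v] /= /eqP[def_B un vp conj_uv]] card_B.
have nuv : <[v]> \subset 'N(<[u]>) by rewrite norms_cycle conj_uv groupV cycle_id.
rewrite norm_joinEr // in def_B.
have {}card_B : #|<[u]> * <[v]>| = (n * p)%N.
  by rewrite def_B card_B; case/dvdnP: even_p => k ->; rewrite muln2 doubleK; lia.
have le_u : (#[u] <= n)%N by rewrite dvdn_leq ?(ltnW n_gt1) // order_dvdn un.
have le_v : (#[v] <= p)%N by rewrite dvdn_leq ?(ltnW p_gt1) // order_dvdn vp.
have ti_uv : <[u]> :&: <[v]> = 1 by rewrite cardMg_TI // card_B leq_mul.
have [o_u o_v] : #[u] = n /\ #[v] = p.
  have := esym (leqif_mul (leqif_eq le_u) (leqif_eq le_v)).2.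
  by rewrite -TI_cardMg // card_B eqxx => /orP[|/andP[/eqP-> /eqP->]] //; lia.
by exists u, v; rewrite sdprodE.
Qed.

Lemma dicyclic_group_exists n : (1 < n)%N -> ~~ odd n ->
  exists (gT : finGroupType) (Q : {group gT}), #|Q| = (2 * n)%N /\
    Q \isog Grp (x : y : (x ^+ n, y ^+ 2 = x ^+ n./2, x ^ y = x^-1)).
Proof.
move=> n_gt1 n_even.
have [u [v [sd_uv o_u o_v conj_uv]]] := ext_dihedral_sdprod n_gt1 (isT : 1 < 4)%N isT.
set z := u ^+ n./2 * v ^+ 2.
exists (coset_of <[z]>), ([set: _] / <[z]>)%G.
by split; [apply: card_dicyclic_quotient | apply: dicyclic_quotient_isog].
Qed.

Lemma dicyclic_isog (gT : finGroupType) (G : {group gT}) n (x y : gT) :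
    (1 < n)%N -> ~~ odd n -> G :=: <[x]> <*> <[y]> -> #[x] = n ->
    y ^+ 2 = x ^+ n./2 -> x ^ y = x^-1 -> y \notin <[x]> ->
  G \isog Grp (x : y : (x ^+ n, y ^+ 2 = x ^+ n./2, x ^ y = x^-1)).
Proof.
move=> n_gt1 n_even def_G o_x y2 conj_xy y_notin_x.
have [rT [Q [card_Q iso_Q]]] := dicyclic_group_exists n_gt1 n_even.
have hom_G : G \homg Grp (x : y : (x ^+ n, y ^+ 2 = x ^+ n./2, x ^ y = x^-1)).
  have expx_n : x ^+ n = 1 by rewrite -o_x expg_order.
  by apply/existsP; exists (x, y); rewrite /= !xpair_eqE -def_G expx_n y2 conj_xy !eqxx.
apply: isoGrp_trans (iso_Q); apply/(isoGrpP _ iso_Q); split=> //.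
have /dvdnP[k card_G] : (n %| #|G|)%N by rewrite -o_x def_G cardSg // joing_subl.
have : (#|G| %| 2 * n)%N by rewrite -card_Q card_homg // iso_Q.
rewrite card_Q card_G dvdn_pmul2r ?(ltnW n_gt1) //.
case: k card_G => [|[|[|k]]] card_G // _.
have /eqP eq_xG : <[x]> == G.
  by rewrite eqEcard {1}def_G joing_subl card_G mul1n -orderE o_x leqnn.
have y_G : y \in G by rewrite def_G (subsetP (joing_subr _ _)) ?cycle_id.
by rewrite -eq_xG (negPf y_notin_x) in y_G.
Qed.

End Dicyclic.

Local Open Scope ring_scope.

Lemma rmorph_sqr_fixed_opp (R : idomainType) (s : {rmorphism R -> R}) (x : R) :
  s x != x -> s (x ^+ 2) = x ^+ 2 -> s x = - x.
Proof.
move=> sx_neq_x sx2; have /esym := eqf_sqr (s x) x.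
by rewrite -rmorphXn sx2 eqxx (negPf sx_neq_x) => /eqP.
Qed.

Lemma prim_expr_half (R : idomainType) n (z : R) :
  (n.*2).-primitive_root z -> z ^+ n = -1.
Proof.
move=> prim_z; have n2_gt0 := prim_order_gt0 prim_z.
have : (z ^+ n) ^+ 2 == 1 by rewrite -exprM muln2 prim_expr_order.
rewrite sqrf_eq1 -(prim_order_dvd prim_z) => /orP[/dvdn_leq|/eqP //].
by rewrite -addnn; lia.
Qed.

Section FixedFieldOfInvolution.
Variables (K : finFieldType) (sigma : {rmorphism K -> K}).
Hypotheses (sigmaK : involutive sigma) (char_not2 : 2%:R != 0 :> K).
Variable d : K.
Hypotheses (d_notF : sigma d != d) (d2_F : sigma (d ^+ 2) = d ^+ 2).

Local Notation F := (fixF sigma).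
Local Notation q := #|fixF sigma|.

Let sigma_d : sigma d = - d := rmorph_sqr_fixed_opp d_notF d2_F.

Let d_neq0 : d != 0.
Proof. by apply: contraNneq d_notF => ->; rewrite rmorph0. Qed.

Let re x := (x + sigma x) / 2%:R.
Let im x := (x - sigma x) / (2%:R * d).

Lemma mem_fixF x : (x \in F) = (sigma x == x).
Proof. by rewrite inE. Qed.

Let re_fixF x : re x \in F.
Proof. by rewrite mem_fixF /re fmorph_div rmorph_nat rmorphD sigmaK addrC. Qed.

Let im_fixF x : im x \in F.
Proof.
rewrite mem_fixF /im fmorph_div rmorphM rmorph_nat rmorphB sigmaK sigma_d; apply/eqP.
by rewrite mulrN invrN mulrN -mulNr opprB.
Qed.

Let re_im_decomp x : x = re x + im x * d.
Proof. by rewrite /re /im; field; rewrite d_neq0 char_not2. Qed.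

Let re_im_coords b c : b \in F -> c \in F -> re (b + c * d) = b /\ im (b + c * d) = c.
Proof.
rewrite !mem_fixF /re /im rmorphD rmorphM sigma_d => /eqP-> /eqP->.
by split; field; rewrite ?d_neq0 char_not2.
Qed.

Lemma card_fixF_sqr : #|K| = (q * q)%N.
Proof.
pose coords x := (re x, im x).
have coords_inj : injective coords.
  by move=> x y [re_xy im_xy]; rewrite (re_im_decomp x) (re_im_decomp y) re_xy im_xy.
rewrite -cardsT -(card_imset _ coords_inj) -cardsX; apply: eq_card => -[b c].
apply/imsetP/idP => [[x _ [-> ->]] | ]; first by rewrite in_setX re_fixF im_fixF.
rewrite inE /= => /andP[b_F c_F]; exists (b + c * d); rewrite ?inE //.
by rewrite /coords; have [-> ->] := re_im_coords b_F c_F.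
Qed.

Lemma fixF_card_gt1 : (1 < q)%N.
Proof. by have := finNzRing_gt1 K; rewrite card_fixF_sqr; case: (q) => [|[|]]. Qed.

Lemma fixF_expq x : x \in F -> x ^+ q = x.
Proof.
have [-> _ | x_neq0 x_F] := eqVneq x 0; first by rewrite expr0n gtn_eqF // ltnW // fixF_card_gt1.
pose UF := [set u : {unit K} | sigma (val u) == val u].
have UF_group : group_set UF.
  apply/group_setP; split=> [|u v]; first by rewrite inE val_unit1 rmorph1.
  by rewrite !inE val_unitM rmorphM => /eqP-> /eqP->.
have card_UF : #|UF| = q.-1.
  rewrite -(card_imset _ val_inj) (cardsD1 0 F) mem_fixF rmorph0 eqxx add1n /=.
  apply: eq_card => y; rewrite !inE; apply/imsetP/andP => [[u]|[y_neq0 y_F]].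
    by rewrite inE => /eqP sigma_u ->; rewrite -unitfE (valP u) sigma_u eqxx.
  by exists (finField_unit y_neq0); rewrite ?inE.
have /(congr1 val) : (finField_unit x_neq0 ^+ #|UF| = 1)%g.
  by apply: (expg_cardG (G := Group UF_group)); rewrite inE -mem_fixF.
rewrite val_unitX val_unit1 /= card_UF => x_q1.
by rewrite -(prednK (ltnW fixF_card_gt1)) exprS x_q1 mulr1.
Qed.

Lemma pchar_nat_q : [pchar K].-nat q.
Proof.
have [p p_prime p_char] := finPcharP K.
have p_K : (p.-group [set: K])%g := abelem_pgroup (fin_ring_pchar_abelem p_char).
rewrite (eq_pnat _ (pcharf_eq p_char)) (pnat_dvd _ p_K) //.
by rewrite cardsT card_fixF_sqr dvdn_mull.
Qed.

Lemma odd_q : odd q.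
Proof.
rewrite -[odd _]negbK -dvdn2; apply: contra char_not2 => two_q.
have : 2%N \in [pchar K].
  by apply: (pnatPpi pchar_nat_q); rewrite mem_primes two_q (ltnW fixF_card_gt1).
by rewrite inE => /andP[].
Qed.

Lemma fixF_prim_root : exists c : K, (q * q).-1.-primitive_root c.
Proof.
have /hasP[c _ prim_c] : has (#|K|.-1).-primitive_root (enum (predC1 (0 : K))).
  apply: has_prim_root; last by rewrite -cardE cardC1.
  - by rewrite -subn1 subn_gt0 finNzRing_gt1.
  - apply/allP => x; rewrite mem_enum /= unity_rootE => x_neq0.
    apply/eqP/(mulfI x_neq0); rewrite -exprS prednK ?expf_card ?mulr1 //.
    exact: ltnW (finNzRing_gt1 K).
  - exact: enum_uniq.
by exists c; rewrite -card_fixF_sqr.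
Qed.

Lemma sigma_expq x : sigma x = x ^+ q.
Proof.
have frobD y z : (y + z) ^+ q = y ^+ q + z ^+ q := exprDn_pchar y z pchar_nat_q.
have d_q : d ^+ q = - d.
  have : (d ^+ q) ^+ 2 == d ^+ 2 by rewrite -exprM mulnC exprM fixF_expq // mem_fixF d2_F.
  rewrite eqf_sqr => /orP[/eqP d_q_fixed | /eqP //]; exfalso.
  have expq_id (y : K) : y ^+ q = y.
    by rewrite {1}(re_im_decomp y) frobD (exprMn _ (im y)) d_q_fixed !fixF_expq.
  have [c prim_c] := fixF_prim_root.
  have : c ^+ q.-1 == 1.
    have c_neq0 : c != 0 by rewrite (prim_root_eq0 prim_c) -lt0n (prim_order_gt0 prim_c).
    by rewrite -(inj_eq (mulfI c_neq0)) -exprS prednK ?expq_id ?mulr1 // ltnW // fixF_card_gt1.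
  rewrite -(prim_order_dvd prim_c) => /dvdn_leq.
  by have := fixF_card_gt1; nia.
rewrite {1 2}(re_im_decomp x) rmorphD rmorphM frobD (exprMn _ (im x)) d_q !fixF_expq // sigma_d.
by move: (re_fixF x) (im_fixF x); rewrite !mem_fixF => /eqP-> /eqP->.
Qed.

End FixedFieldOfInvolution.

Section SfAlgHom.
Variables (K : fieldType) (sigma : K -> K) (a : K).

Definition sf_alg_hom (g : K * K -> K * K) : Prop :=
  [/\ forall x y, g (sf_add x y) = sf_add (g x) (g y),
      forall c x, sigma c = c -> g (sf_scale c x) = sf_scale c (g x)
    & forall x y, g (sf_mul sigma a x y) = sf_mul sigma a (g x) (g y)].

Lemma sf_alg_hom_eq (g1 g2 : K * K -> K * K) :
  g1 =1 g2 -> sf_alg_hom g1 -> sf_alg_hom g2.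
Proof.
by move=> eq_g [add_g scale_g mul_g]; split=> *; rewrite -!eq_g ?add_g ?scale_g ?mul_g.
Qed.

End SfAlgHom.

Section Twists.
Variables (K : fieldType) (sigma : {rmorphism K -> K}) (a : K).

Definition sf_twist (k : K) (x : K * K) : K * K := (x.1, x.2 * k).
Definition sf_sigma_twist (k : K) (x : K * K) : K * K := (sigma x.1, sigma x.2 * k).

Lemma sf_twist_inj k : k != 0 -> injective (sf_twist k).
Proof. by move=> k_neq0 [x1 x2] [y1 y2] [-> /(mulIf k_neq0) ->]. Qed.

Lemma sf_sigma_twist_inj k : involutive sigma -> k != 0 -> injective (sf_sigma_twist k).
Proof.
move=> sigmaK k_neq0 [x1 x2] [y1 y2] [/(can_inj sigmaK) -> /(mulIf k_neq0)].
by move/(can_inj sigmaK) ->.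
Qed.

Lemma sf_twistM k l x : sf_twist k (sf_twist l x) = sf_twist (l * k) x.
Proof. by rewrite /sf_twist mulrA. Qed.

Lemma sf_alg_hom_twist k : k * sigma k = 1 -> sf_alg_hom sigma a (sf_twist k).
Proof.
move=> norm_k; split=> [[x1 x2] [y1 y2] | c [x1 x2] _ | [x1 x2] [y1 y2]];
  rewrite /sf_twist /sf_add /sf_scale /sf_mul /= ?rmorphM; congr (_, _); try ring.
by ring: norm_k.
Qed.

Lemma sf_alg_hom_sigma_twist k : involutive sigma -> k * sigma k * a = sigma a ->
  sf_alg_hom sigma a (sf_sigma_twist k).
Proof.
move=> sigmaK norm_k; split=> [[x1 x2] [y1 y2] | c [x1 x2] sigma_c | [x1 x2] [y1 y2]];
  rewrite /sf_sigma_twist /sf_add /sf_scale /sf_mul /= ?rmorphD ?rmorphM ?sigmaK ?sigma_c;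
  congr (_, _); try ring.
by rewrite -norm_k; ring.
Qed.

Lemma sf_mul_invl c : c != 0 -> sf_mul sigma a (c^-1, 0) (c, 0) = sf_one.
Proof. by move=> c_neq0; rewrite /sf_mul /= rmorph0 mulVf // !(mulr0, mul0r, addr0). Qed.

Lemma sf_twist_inner c x : c != 0 ->
  sf_twist (sigma c / c) x = sf_mul sigma a (sf_mul sigma a (c^-1, 0) x) (c, 0).
Proof.
move=> c_neq0; case: x => x1 x2; rewrite /sf_twist /sf_mul /= rmorph0.
by congr (_, _); field.
Qed.

End Twists.

Section SfAutGroup.
Variables (K : finFieldType) (sigma : K -> K) (a : K).

Definition sf_auts : {set {perm (K * K)}} :=
  [set g : {perm (K * K)} |
    [&& [forall x, forall y, g (sf_add x y) == sf_add (g x) (g y)],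
        [forall c, forall x, (sigma c == c) ==> (g (sf_scale c x) == sf_scale c (g x))]
      & [forall x, forall y, g (sf_mul sigma a x y) == sf_mul sigma a (g x) (g y)]]].

Lemma sf_autsP (g : {perm (K * K)}) : reflect (sf_alg_hom sigma a g) (g \in sf_auts).
Proof.
rewrite inE; apply: (iffP and3P) => [[/'forall_forallP add_g /'forall_forallP scale_g
                                     /'forall_forallP mul_g] | [add_g scale_g mul_g]].
  split=> [x y | c x /eqP sigma_c | x y]; apply/eqP; [exact: add_g | | exact: mul_g].
  by move/implyP: (scale_g c x); apply.
split; apply/'forall_forallP => x y; rewrite ?add_g ?mul_g //.
by apply/implyP => /eqP /scale_g ->.
Qed.

Lemma group_set_sf_auts : group_set sf_auts.
Proof.
apply/group_setP; split=> [|g h /sf_autsP[add_g scale_g mul_g] /sf_autsP[add_h scale_h mul_h]].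
  by apply/sf_autsP; split=> *; rewrite !perm1.
by apply/sf_autsP; split=> *; rewrite !permM ?add_g ?add_h ?mul_g ?mul_h ?scale_g ?scale_h.
Qed.

Canonical sf_auts_group := group group_set_sf_auts.

Lemma sf_auts_sub_AutLf : sf_auts \subset AutLf sigma a.
Proof.
apply/subsetP => g /sf_autsP[add_g _ mul_g]; rewrite inE; apply/andP; split.
  have := add_g sf_zero sf_zero; rewrite /sf_add /= addr0.
  case: (g _) => g1 g2 [g1_dbl g2_dbl]; apply/eqP; congr (_, _).
    by apply: (addrI g1); rewrite addr0 -g1_dbl.
  by apply: (addrI g2); rewrite addr0 -g2_dbl.
by apply/'forall_forallP => x y; rewrite mul_g.
Qed.

Lemma sf_auts_extend (g : {perm (K * K)}) : g \in sf_auts -> extends_to_aut sigma a g.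
Proof.
case/sf_autsP=> add_g scale_g mul_g; exists g; split=> //; split=> //.
by exists (g^-1)%g => x; rewrite ?permK ?permKV.
Qed.

End SfAutGroup.

Section TwistPerms.
Variables (K : finFieldType) (sigma : {rmorphism K -> K}) (a k : K).
Hypothesis k_neq0 : k != 0.

Local Notation tau := (perm (sf_twist_inj k_neq0)).

Lemma sf_twist_permX n x : (tau ^+ n)%g x = sf_twist (k ^+ n) x.
Proof.
elim: n x => [|n IHn] x; first by rewrite expg0 perm1 /sf_twist expr0 mulr1; case: x.
by rewrite expgSr permM IHn permE sf_twistM -exprSr.
Qed.

Lemma sf_twist_permX_eq1 n : ((tau ^+ n)%g == 1%g) = (k ^+ n == 1).
Proof.
apply/eqP/eqP => [tau_n | k_n].
  have := congr1 (fun g : {perm _} => g (0, 1)) tau_n.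
  by rewrite /= sf_twist_permX perm1 /sf_twist /= mul1r => -[].
by apply/permP => x; rewrite sf_twist_permX perm1 k_n /sf_twist mulr1; case: x.
Qed.

Lemma order_sf_twist_perm m : m.-primitive_root k -> #[tau]%g = m.
Proof.
move=> prim_k; apply/eqP; rewrite eqn_dvd order_dvdn sf_twist_permX_eq1.
rewrite (prim_expr_order prim_k) eqxx (prim_order_dvd prim_k).
by rewrite -sf_twist_permX_eq1 -order_dvdn dvdnn.
Qed.

Lemma sf_twist_perm_aut : k * sigma k = 1 -> tau \in sf_auts sigma a.
Proof.
move=> norm_k; apply/sf_autsP; apply: sf_alg_hom_eq (sf_alg_hom_twist a norm_k).
by move=> x; rewrite permE.
Qed.

Lemma sf_sigma_twist_perm_aut (sigmaK : involutive sigma) :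
  k * sigma k * a = sigma a -> perm (sf_sigma_twist_inj sigmaK k_neq0) \in sf_auts sigma a.
Proof.
move=> norm_k; apply/sf_autsP; apply: sf_alg_hom_eq (sf_alg_hom_sigma_twist sigmaK norm_k).
by move=> x; rewrite permE.
Qed.

End TwistPerms.

Section QuaternionLoopAutomorphisms.
Variables (K : finFieldType) (sigma : {rmorphism K -> K}).
Hypotheses (sigmaK : involutive sigma) (char_not2 : 2%:R != 0 :> K).
Variable d : K.
Hypotheses (d_notF : sigma d != d) (d2_F : sigma (d ^+ 2) = d ^+ 2).
Variables (a c : K).

Local Notation q := #|fixF sigma|.
Hypothesis prim_c : (q * q).-1.-primitive_root c.

Let q_gt1 : (1 < q)%N := fixF_card_gt1 sigmaK char_not2 d_notF d2_F.
Let q_odd : odd q := odd_q sigmaK char_not2 d_notF d2_F.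
Let sigmaE : forall x, sigma x = x ^+ q := sigma_expq sigmaK char_not2 d_notF d2_F.

Let c_neq0 : c != 0.
Proof. by rewrite (prim_root_eq0 prim_c) -lt0n (prim_order_gt0 prim_c). Qed.

Let N_factor : (q * q).-1 = (q.-1 * q.+1)%N.
Proof. by move: q_gt1; nia. Qed.

Let w := c ^+ q.-1.

Let prim_w : q.+1.-primitive_root w.
Proof.
have -> : w = c ^+ ((q * q).-1 %/ q.+1) by rewrite N_factor mulnK.
by apply: (dvdn_prim_root prim_c); rewrite N_factor dvdn_mull.
Qed.

Let w_neq0 : w != 0.
Proof. by rewrite expf_neq0. Qed.

Let norm_w : w * sigma w = 1.
Proof. by rewrite sigmaE -exprS (prim_expr_order prim_w). Qed.

Let sigma_twist_expc n : sigma (c ^+ n) / c ^+ n = w ^+ n.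
Proof.
rewrite sigmaE -exprM mulnC exprM -exprVn -exprMn; congr (_ ^+ n).
by rewrite -(prednK (ltnW q_gt1)) exprS mulrC mulKf.
Qed.

Let h := perm (sf_twist_inj w_neq0).

Let h_aut : h \in sf_auts sigma a.
Proof. exact: sf_twist_perm_aut. Qed.

Let order_h : #[h]%g = q.+1.
Proof. exact: order_sf_twist_perm. Qed.

Lemma cyclic_inner_auts : exists G : {group {perm (K * K)}},
  [/\ G \subset AutLf sigma a, (G \isog Zp q.+1)%g &
      forall phi, phi \in G -> inner_aut sigma a phi /\ extends_to_aut sigma a phi].
Proof.
have h_G : <[h]>%g \subset sf_auts sigma a by rewrite cycle_subG.
exists <[h]>%G; split.
- exact: subset_trans h_G (sf_auts_sub_AutLf sigma a).
- by rewrite isog_sym -order_h Zp_isog.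
move=> _ /cycleP[n ->]; split; last exact/sf_auts_extend/(subsetP h_G)/mem_cycle.
have cn_neq0 : c ^+ n != 0 by rewrite expf_neq0.
exists (c ^+ n, 0), ((c ^+ n)^-1, 0); split; first by apply/eqP => -[]; apply/eqP.
  exact: sf_mul_invl.
by move=> x _; rewrite sf_twist_permX -sigma_twist_expc (sf_twist_inner _ a).
Qed.

Hypothesis sigma_a : sigma a = - a.

Let k := c ^+ q./2.

Let prim_k : (q.+1.*2).-primitive_root k.
Proof.
have N_half : (q * q).-1 = (q./2 * q.+1.*2)%N.
  by have := odd_double_half q; rewrite q_odd -!muln2; nia.
rewrite /k -[q./2](@mulnK _ (q.+1.*2)) -?N_half ?double_gt0 //.
by apply: (dvdn_prim_root prim_c); rewrite N_half dvdn_mull.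
Qed.

Let k_neq0 : k != 0.
Proof. by rewrite expf_neq0. Qed.

Let norm_k : k * sigma k = -1.
Proof. by rewrite sigmaE -exprS (prim_expr_half prim_k). Qed.

Let j := perm (sf_sigma_twist_inj sigmaK k_neq0).

Let j_aut : j \in sf_auts sigma a.
Proof. by apply: sf_sigma_twist_perm_aut; rewrite norm_k sigma_a mulN1r. Qed.

Let j_sqr : (j ^+ 2 = h ^+ q.+1./2)%g.
Proof.
have w_half : w ^+ q.+1./2 = -1.
  apply: prim_expr_half.
  suff -> : q.+1./2.*2 = q.+1 by [].
  by rewrite -[RHS]odd_double_half oddS q_odd.
apply/permP => -[x1 x2]; rewrite expgS expg1 permM sf_twist_permX w_half !permE.
by rewrite /sf_sigma_twist /sf_twist /= rmorphM !sigmaK mulrAC -mulrA norm_k.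
Qed.

Let conj_h_j : (h ^ j = h^-1)%g.
Proof.
have hyh : (h * j * h = j)%g.
  apply/permP => -[x1 x2]; rewrite !permM !permE /sf_sigma_twist /sf_twist /= rmorphM.
  by congr (_, _); rewrite -[RHS]mulr1 -norm_w; ring.
have hy : (h * j = j * h^-1)%g by rewrite -{2}hyh mulgK.
by rewrite conjgE hy mulKg.
Qed.

Let j_notin_h : j \notin <[h]>%g.
Proof.
apply/cycleP => -[i /(congr1 (fun g : {perm _} => g (d, 0)))].
rewrite sf_twist_permX permE /sf_twist /sf_sigma_twist /= rmorph0 !mul0r => -[sigma_d].
by move: d_notF; rewrite sigma_d eqxx.
Qed.

Lemma dicyclic_auts : exists G : {group {perm (K * K)}},
  [/\ G \subset AutLf sigma a,
      (G \isog Grp (x : y : (x ^+ q.+1, y ^+ 2 = x ^+ (q.+1)./2, x ^ y = x ^-1)))%g &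
      forall phi, phi \in G -> extends_to_aut sigma a phi].
Proof.
have G_auts : (<[h]> <*> <[j]> \subset sf_auts sigma a)%g.
  by rewrite join_subG !cycle_subG h_aut j_aut.
exists (<[h]> <*> <[j]>)%G; split.
- exact: subset_trans G_auts (sf_auts_sub_AutLf sigma a).
- apply: dicyclic_isog => //; first by rewrite ltnS ltnW.
  by rewrite /= q_odd.
by move=> phi /(subsetP G_auts); apply: sf_auts_extend.
Qed.

End QuaternionLoopAutomorphisms.

Unset Implicit Arguments.

Theorem mainTheorem6 (K : finFieldType) (sigma : {rmorphism K -> K})
  (sigma_inv : forall x, sigma (sigma x) = x)
  (sigma_nontriv : exists x, sigma x != x)
  (char_not2 : (2%:R : K) != 0)
  (d : K) (d_notF : sigma d != d) (d2_F : sigma (d ^+ 2) = d ^+ 2)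
  (a : K) (a_notF : sigma a != a) :
  let q := #|fixF sigma| in
  ((forall lam : K, sigma lam = lam -> lam != 0 -> a != lam * d) ->
     exists G : {group {perm (K * K)}},
       [/\ G \subset AutLf sigma a, (G \isog Zp q.+1)%g &
           forall phi, phi \in G -> inner_aut sigma a phi /\ extends_to_aut sigma a phi])
  /\
  ((exists lam : K, [/\ sigma lam = lam, lam != 0 & a = lam * d]) ->
     exists G : {group {perm (K * K)}},
       [/\ G \subset AutLf sigma a,
           (G \isog Grp (x : y : (x ^+ q.+1, y ^+ 2 = x ^+ (q.+1)./2, x ^ y = x ^-1)))%g &
           forall phi, phi \in G -> extends_to_aut sigma a phi]).
Proof.
move=> q; have [c prim_c] := fixF_prim_root sigma_inv char_not2 d_notF d2_F.
split=> [_ | [lam [sigma_lam _ a_lam_d]]].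
  exact: (cyclic_inner_auts sigma_inv char_not2 d_notF d2_F a prim_c).
apply: (dicyclic_auts sigma_inv char_not2 d_notF d2_F prim_c).
by rewrite a_lam_d rmorphM sigma_lam (rmorph_sqr_fixed_opp d_notF d2_F) mulrN.
Qed.
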